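(* Let $\mathbb{F}$ be an algebraically closed field of characteristic $0$, $D$ an $\mathbb{F}$-vector space with $\dim D=3$, and $\Gamma\subseteq D^{\ast}$ an additive subgroup with $\Gamma\simeq\mathbb{Z}^3$ and $\bigcap_{\alpha\in\Gamma}\ker\alpha=\{0\}$. Let $M=\bigoplus_{\theta\in\Gamma}M_\theta$ be a $\Gamma$-graded $\mathcal{S}(\Gamma,D)$-module with $\dim M_\theta=1$ for each $\theta$, and write $M_\theta=\mathbb{F}w_\theta$. Fix $0\neq\sigma\in\Gamma$, nonzero $\partial,\partial'\in\ker\sigma$ and $\nu\in\Gamma$, and define scalars $c_i$ ($i\in\mathbb{Z}$) by $x^{-\sigma}\partial'.x^{\sigma}\partial.w_{\nu+i\sigma}=c_iw_{\nu+i\sigma}$. Then $c_i=c$ is independent of $i$. Moreover, if $c\neq0$, then for each $a\in\{\sqrt c,-\sqrt c\}$ there exist nonzero $v_{\nu+i\sigma}\in M_{\nu+i\sigma}$ ($i\in\mathbb{Z}$) such that $x^{\sigma}\partial.v_{\nu+(i-1)\sigma}=a\,v_{\nu+i\sigma}$ and $x^{-\sigma}\partial'.v_{\nu+i\sigma}=a\,v_{\nu+(i-1)\sigma}$ for all $i\in\mathbb{Z}$.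
   Context: $\mathcal{S}(\Gamma,D)$ is the Lie algebra spanned by symbols $x^\alpha\partial$ with $\alpha\in\Gamma\setminus\{0\}$, $\partial\in\ker\alpha$ (linear in $\partial$), with bracket $[x^\alpha\partial_1,x^\beta\partial_2]=x^{\alpha+\beta}(\beta(\partial_1)\partial_2-\alpha(\partial_2)\partial_1)$ (the subalgebra of the generalized Witt algebra $\mathbb{F}[\Gamma]\otimes D$). A $\Gamma$-graded module satisfies $x^\alpha\partial.M_\theta\subseteq M_{\alpha+\theta}$. *)

From HB Require Import structures.
From mathcomp Require Import all_boot all_order all_algebra.
Set Implicit Arguments. Unset Strict Implicit. Unset Printing Implicit Defensive.
Import Order.TTheory GRing.Theory Num.Theory.
Local Open Scope ring_scope.

(* D := F^3 (row vectors 'rV[F]_3); D^* is identified with 'rV[F]_3 via the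
   standard pairing [ev]. *)
Definition ev (F : fieldType) (g d : 'rV[F]_3) : F := \sum_(i < 3) g 0 i * d 0 i.

(* Gamma is the image of Z^3 = 'rV[int]_3 under the additive map
   n |-> n_0 g_0 + n_1 g_1 + n_2 g_2 (which is required to be injective). *)
Definition gam (F : fieldType) (g : 'I_3 -> 'rV[F]_3) (n : 'rV[int]_3) : 'rV[F]_3 :=
  \sum_(i < 3) (n 0 i)%:~R *: g i.

Definition lincomb (F : fieldType) (M : lmodType F) (w : 'rV[int]_3 -> M)
  (s : seq 'rV[int]_3) (k : 'rV[int]_3 -> F) : M :=
  \sum_(t <- s) k t *: w t.

(* [rho a d] is the action of x^{gam a} d on M (meaningful for a != 0 and
   d in ker (gam a)).  The module axioms of S(Gamma, D): *)
Definition is_S_module (F : fieldType) (g : 'I_3 -> 'rV[F]_3) (M : lmodType F)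
  (rho : 'rV[int]_3 -> 'rV[F]_3 -> M -> M) : Prop :=
  (forall a d (k : F) (m1 m2 : M), rho a d (k *: m1 + m2) = k *: rho a d m1 + rho a d m2)
  /\ (forall a d1 d2 (k : F) (m : M), a != 0 ->
        ev (gam g a) d1 = 0 -> ev (gam g a) d2 = 0 ->
        rho a (k *: d1 + d2) m = k *: rho a d1 m + rho a d2 m)
  (* bracket relation [x^a d1, x^b d2] = x^(a+b) (b(d1) d2 - a(d2) d1) ;
     when a + b = 0 the right-hand side is the zero element of S *)
  /\ (forall a b d1 d2 (m : M), a != 0 -> b != 0 ->
        ev (gam g a) d1 = 0 -> ev (gam g b) d2 = 0 ->
        rho a d1 (rho b d2 m) - rho b d2 (rho a d1 m) =
        (if a + b == 0 then 0
         else rho (a + b) (ev (gam g b) d1 *: d2 - ev (gam g a) d2 *: d1) m)).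

Definition is_basis (F : fieldType) (M : lmodType F) (w : 'rV[int]_3 -> M) : Prop :=
  (forall m : M, exists s k, m = lincomb w s k)
  /\ (forall s k, uniq s -> lincomb w s k = 0 -> forall t, t \in s -> k t = 0).

Definition in_weight (F : fieldType) (M : lmodType F) (w : 'rV[int]_3 -> M)
  (theta : 'rV[int]_3) (m : M) : Prop := exists k : F, m = k *: w theta.

From HB Require Import structures.
From mathcomp Require Import all_boot all_order all_algebra.
Import Order.TTheory GRing.Theory Num.Theory.
Set Implicit Arguments. Unset Strict Implicit. Unset Printing Implicit Defensive.
Local Open Scope ring_scope.

(* Since [sigma + (- sigma) = 0], the operators [A := x^sigma d] and
   [B := x^-sigma d'] commute, and [B A] acts on each line [M_theta] by a
   scalar.  Writing [A w_t = k w_(t+sigma)] and [B w_(t+sigma) = k' w_t],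
   commutation gives [B A w_t = k k' w_t] and [B A w_(t+sigma) = k' k w_(t+sigma)],
   so the scalar is constant along [nu + Z sigma].  If it is [c = a^2 != 0],
   then [B A] and [A B] both act by [a^2] on the whole string, so starting from
   [w_nu] and applying [a^-1 A] upwards and [a^-1 B] downwards produces the
   required ladder; [B (a^-1 A v) = a v] shows that no vector of it vanishes. *)

Lemma scaler_inj_neq0 (F : fieldType) (M : lmodType F) (v : M) (k k' : F) :
  v != 0 -> k *: v = k' *: v -> k = k'.
Proof.
move=> v0 /eqP; rewrite -subr_eq0 -scalerBl scaler_eq0 (negPf v0) orbF.
by rewrite subr_eq0 => /eqP.
Qed.

Lemma scalable_0 (F : fieldType) (M : lmodType F) (A : M -> M) :
  scalable A -> A 0 = 0.
Proof. by move=> Asc; have := Asc 0 0; rewrite !scale0r. Qed.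

Lemma in_weightZ (F : fieldType) (M : lmodType F) (w : 'rV[int]_3 -> M) t k m :
  in_weight w t m -> in_weight w t (k *: m).
Proof. by move=> [k' ->]; exists (k * k'); rewrite scalerA. Qed.

(* [Negz n] is [-(n+1)], hence the [n.+1] iterations of [g]. *)
Definition zorbit {T : Type} (f g : T -> T) (x : T) (i : int) : T :=
  match i with Posz n => iter n f x | Negz n => iter n.+1 g x end.

Section ZOrbit.
Variables (T : Type) (f g : T -> T) (x : T).

Lemma zorbit_ind (P : int -> T -> Prop) :
  P 0 x -> (forall i y, P i y -> P (i + 1) (f y)) ->
  (forall i y, P i y -> P (i - 1) (g y)) ->
  forall i, P i (zorbit f g x i).
Proof.
move=> P0 Pf Pg; elim/int_rect => [//|n IHn|n IHn].
  by have := Pf _ _ IHn; rewrite addrC -intS.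
case: n IHn => [_|n IHn]; first exact: (Pg 0).
by have := Pg _ _ IHn; rewrite -opprD addrC -intS.
Qed.

Lemma zorbit_pred i :
  zorbit f g x i = f (zorbit f g x (i - 1)) \/
  zorbit f g x (i - 1) = g (zorbit f g x i).
Proof.
case: i => [[|n]|n]; [by right | left | right].
  by have -> : n.+1%:Z - 1 = n by rewrite intS addrC addKr.
by have -> : Negz n - 1 = Negz n.+1 by rewrite !NegzE -opprD addrC.
Qed.

End ZOrbit.

Section EigenLadder.
Variables (F : fieldType) (M : lmodType F) (A B : M -> M) (a : F).
Hypotheses (A_scalable : scalable A) (B_scalable : scalable B).
Hypothesis AB_comm : forall m, A (B m) = B (A m).
Hypothesis a_neq0 : a != 0.

Lemma BA_eigen_A m : B (A m) = a ^+ 2 *: m -> B (A (A m)) = a ^+ 2 *: A m.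
Proof. by move=> Em; rewrite -AB_comm Em A_scalable. Qed.

Lemma BA_eigen_B m : B (A m) = a ^+ 2 *: m -> B (A (B m)) = a ^+ 2 *: B m.
Proof. by move=> Em; rewrite AB_comm Em B_scalable. Qed.

Lemma BA_eigenZ k m : B (A m) = a ^+ 2 *: m -> B (A (k *: m)) = a ^+ 2 *: (k *: m).
Proof. by move=> Em; rewrite A_scalable B_scalable Em !scalerA mulrC. Qed.

Lemma ladder_up m : B (A m) = a ^+ 2 *: m ->
  A m = a *: (a^-1 *: A m) /\ B (a^-1 *: A m) = a *: m.
Proof.
move=> Em; rewrite scalerA mulfV // scale1r B_scalable Em scalerA.
by rewrite expr2 mulKf.
Qed.

Lemma ladder_down m : B (A m) = a ^+ 2 *: m ->
  A (a^-1 *: B m) = a *: m /\ B m = a *: (a^-1 *: B m).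
Proof.
move=> Em; rewrite scalerA mulfV // scale1r A_scalable AB_comm Em scalerA.
by rewrite expr2 mulKf.
Qed.

Definition ladder (v0 : M) : int -> M :=
  zorbit (fun m => a^-1 *: A m) (fun m => a^-1 *: B m) v0.

Lemma ladder_eigen v0 : B (A v0) = a ^+ 2 *: v0 ->
  forall i, B (A (ladder v0 i)) = a ^+ 2 *: ladder v0 i.
Proof.
move=> Ev0; apply: (zorbit_ind (P := fun _ m => B (A m) = a ^+ 2 *: m)) => //.
  by move=> _ m Em; apply/BA_eigenZ/BA_eigen_A.
by move=> _ m Em; apply/BA_eigenZ/BA_eigen_B.
Qed.

Lemma ladder_step v0 : B (A v0) = a ^+ 2 *: v0 -> forall i,
  A (ladder v0 (i - 1)) = a *: ladder v0 i /\ B (ladder v0 i) = a *: ladder v0 (i - 1).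
Proof.
move=> Ev0 i; have Ei := ladder_eigen Ev0 i; have Ei1 := ladder_eigen Ev0 (i - 1).
rewrite /ladder in Ei Ei1 *.
by case: (zorbit_pred (fun m => a^-1 *: A m) (fun m => a^-1 *: B m) v0 i) => ->;
  [apply: ladder_up | apply: ladder_down].
Qed.

Lemma ladder_neq0 v0 : v0 != 0 -> B (A v0) = a ^+ 2 *: v0 ->
  forall i, ladder v0 i != 0.
Proof.
move=> v00 Ev0.
suff ladder_eigen_neq0 i :
    ladder v0 i != 0 /\ B (A (ladder v0 i)) = a ^+ 2 *: ladder v0 i.
  by move=> i; case: (ladder_eigen_neq0 i).
move: i; apply: (zorbit_ind (P := fun _ m => m != 0 /\ B (A m) = a ^+ 2 *: m))
  => [//|_ m [m0 Em]|_ m [m0 Em]].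
  have [_ Bup] := ladder_up Em; split; last exact/BA_eigenZ/BA_eigen_A.
  by apply: contra_neq m0 => up0; apply: (scalerI a_neq0); rewrite -Bup up0
    scalable_0 // scaler0.
have [Adown _] := ladder_down Em; split; last exact/BA_eigenZ/BA_eigen_B.
by apply: contra_neq m0 => down0; apply: (scalerI a_neq0); rewrite -Adown down0
  scalable_0 // scaler0.
Qed.

End EigenLadder.

Section CommutingShifts.
Variables (F : fieldType) (M : lmodType F) (w : 'rV[int]_3 -> M).
Variables (s : 'rV[int]_3) (A B : M -> M).
Hypothesis w_neq0 : forall t, w t != 0.
Hypotheses (A_scalable : scalable A) (B_scalable : scalable B).
Hypothesis AB_comm : forall m, A (B m) = B (A m).
Hypothesis A_shift : forall t, in_weight w (t + s) (A (w t)).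
Hypothesis B_shift : forall t, in_weight w (t - s) (B (w t)).

Lemma in_weight_A t m : in_weight w t m -> in_weight w (t + s) (A m).
Proof. by move=> [k ->]; rewrite A_scalable; apply: in_weightZ. Qed.

Lemma in_weight_B t m : in_weight w t m -> in_weight w (t - s) (B m).
Proof. by move=> [k ->]; rewrite B_scalable; apply: in_weightZ. Qed.

Lemma BA_weight_scalar t : exists c, B (A (w t)) = c *: w t.
Proof.
have [k Ek] := A_shift t; have [k' Ek'] := B_shift (t + s).
by exists (k * k'); rewrite Ek B_scalable Ek' addrK scalerA.
Qed.

Lemma BA_weight_scalar_shift t c :
  B (A (w t)) = c *: w t <-> B (A (w (t + s))) = c *: w (t + s).
Proof.
have [k Ek] := A_shift t; have [k' Ek'] := B_shift (t + s).
rewrite addrK in Ek'.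
have -> : B (A (w t)) = (k * k') *: w t by rewrite Ek B_scalable Ek' scalerA.
have -> : B (A (w (t + s))) = (k * k') *: w (t + s).
  by rewrite -AB_comm Ek' A_scalable Ek scalerA mulrC.
by split=> /scaler_inj_neq0 -> //.
Qed.

Lemma BA_weight_scalar_string t c : B (A (w t)) = c *: w t ->
  forall i : int, B (A (w (t + s *~ i))) = c *: w (t + s *~ i).
Proof.
move=> Et; elim/int_rect => [|n IHn|n IHn]; first by rewrite mulr0z addr0.
  rewrite intS mulrzDr mulr1z [s + _]addrC addrA.
  exact/(BA_weight_scalar_shift (t + s *~ n) c).
apply/(BA_weight_scalar_shift _ c); rewrite -addrA.
by have -> : s *~ - (n.+1 : int) + s = s *~ - (n : int)
  by rewrite intS opprD mulrzDr mulrN1z addrAC addNr add0r.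
Qed.

Lemma ladder_in_weight (a : F) t v0 : in_weight w t v0 ->
  forall i, in_weight w (t + s *~ i) (ladder A B a v0 i).
Proof.
move=> wv0; apply: (zorbit_ind (P := fun i m => in_weight w (t + s *~ i) m)).
- by rewrite mulr0z addr0.
- move=> i m /in_weight_A /(in_weightZ a^-1).
  by rewrite mulrzDr mulr1z addrA.
- move=> i m /in_weight_B /(in_weightZ a^-1).
  by rewrite mulrzBr mulr1z addrA.
Qed.

End CommutingShifts.

Lemma ev_gamN (F : fieldType) (g : 'I_3 -> 'rV[F]_3) (n : 'rV[int]_3) x :
  ev (gam g (- n)) x = - ev (gam g n) x.
Proof.
rewrite /ev -sumrN; apply: eq_bigr => i _.
rewrite /gam !summxE -mulNr -sumrN; congr (_ * _); apply: eq_bigr => j _.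
by rewrite !mxE intrN mulNr.
Qed.

Section SModule.
Variables (F : fieldType) (g : 'I_3 -> 'rV[F]_3) (M : lmodType F).
Variable rho : 'rV[int]_3 -> 'rV[F]_3 -> M -> M.
Hypothesis rhoS : is_S_module g rho.

Lemma S_module_scalable a d : scalable (rho a d).
Proof.
have [rho_lin _] := rhoS; have rho0 : rho a d 0 = 0.
  have := rho_lin a d 1 0 0; rewrite !scale1r addr0 => E.
  by apply: (addrI (rho a d 0)); rewrite addr0 -E.
by move=> k m; rewrite -[k *: m]addr0 rho_lin rho0 addr0.
Qed.

(* The bracket of [x^a d1] and [x^-a d2] is zero in [S(Gamma, D)]. *)
Lemma S_module_commN a d1 d2 m : a != 0 ->
  ev (gam g a) d1 = 0 -> ev (gam g (- a)) d2 = 0 ->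
  rho a d1 (rho (- a) d2 m) = rho (- a) d2 (rho a d1 m).
Proof.
move=> a0 ad1 ad2; have [_ [_ rho_br]] := rhoS.
by apply/eqP; rewrite -subr_eq0 rho_br ?oppr_eq0 // subrr eqxx.
Qed.

End SModule.

Lemma basis_neq0 (F : fieldType) (M : lmodType F) (w : 'rV[int]_3 -> M) t :
  is_basis w -> w t != 0.
Proof.
move=> [_ w_free]; apply/eqP => wt0.
have := w_free [:: t] (fun _ => 1) isT.
rewrite /lincomb big_seq1 wt0 scaler0 => /(_ erefl t).
by rewrite mem_seq1 eqxx => /(_ isT) /eqP; rewrite oner_eq0.
Qed.

Theorem lemma3p1 (F : closedFieldType) (g : 'I_3 -> 'rV[F]_3)
  (M : lmodType F) (w : 'rV[int]_3 -> M)
  (rho : 'rV[int]_3 -> 'rV[F]_3 -> M -> M)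
  (sigma nu : 'rV[int]_3) (d d' : 'rV[F]_3) :
  [pchar F] =i pred0 ->
  (forall n : 'rV[int]_3, gam g n = 0 -> n = 0) ->
  (forall x : 'rV[F]_3, (forall n : 'rV[int]_3, ev (gam g n) x = 0) -> x = 0) ->
  is_S_module g rho ->
  is_basis w ->
  (forall a d0 theta, a != 0 -> ev (gam g a) d0 = 0 ->
     in_weight w (theta + a) (rho a d0 (w theta))) ->
  sigma != 0 -> d != 0 -> d' != 0 ->
  ev (gam g sigma) d = 0 -> ev (gam g sigma) d' = 0 ->
  exists c : F,
    (forall i : int,
       rho (- sigma) d' (rho sigma d (w (nu + sigma *~ i))) = c *: w (nu + sigma *~ i))
    /\ (c != 0 -> forall a : F, a ^+ 2 = c ->
         exists v : int -> M,
           (forall i : int, v i != 0 /\ in_weight w (nu + sigma *~ i) (v i))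
           /\ (forall i : int,
                 rho sigma d (v (i - 1)) = a *: v i
                 /\ rho (- sigma) d' (v i) = a *: v (i - 1))).
Proof.
move=> _ _ _ rhoS w_basis rho_weight sigma0 _ _ sd sd'.
have sd'N : ev (gam g (- sigma)) d' = 0 by rewrite ev_gamN sd' oppr0.
have Asc := S_module_scalable rhoS sigma d.
have Bsc := S_module_scalable rhoS (- sigma) d'.
have AB_comm m := S_module_commN rhoS m sigma0 sd sd'N.
have w_neq0 t := basis_neq0 t w_basis.
have A_shift t := rho_weight sigma d t sigma0 sd.
have msigma0 : - sigma != 0 by rewrite oppr_eq0.
have B_shift t := rho_weight (- sigma) d' t msigma0 sd'N.
have [c Ec] := BA_weight_scalar Bsc A_shift B_shift nu.
exists c; split.
  exact: (BA_weight_scalar_string w_neq0 Asc Bsc AB_comm A_shift B_shift Ec).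
move=> c0 a Ea; have a0 : a != 0 by apply: contraNneq c0 => a0; rewrite -Ea a0 expr0n.
rewrite -Ea in Ec; exists (ladder (rho sigma d) (rho (- sigma) d') a (w nu)).
split=> i; last exact: (ladder_step Asc Bsc AB_comm a0 Ec i).
split; first exact: (ladder_neq0 Asc Bsc AB_comm a0 (w_neq0 nu) Ec i).
have w_nu : in_weight w nu (w nu) by exists 1; rewrite scale1r.
exact: (ladder_in_weight Asc Bsc A_shift B_shift a w_nu i).
Qed.
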